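(* Let $r \ge t \ge 1$ be integers. If $M$ is a loopless rank-$r$ matroid with no $(t+1)$-claw, then $|E(M)| \ge 2r - t$. If equality holds, then $M$ is the direct sum of $r-t$ circuits and some number of coloops.
   Context: A claw of a matroid $M$ is a set that is both a flat and an independent set of $M$; a $k$-claw is a claw of size $k$. *)

From mathcomp Require Import all_boot.
Set Implicit Arguments. Unset Strict Implicit. Unset Printing Implicit Defensive.

(* A matroid whose ground set E(M) is the whole finite type T. *)
Record matroid (T : finType) := Matroid {
  indep : {set T} -> bool;
  indep0 : indep set0;
  indep_sub : forall A B : {set T}, A \subset B -> indep B -> indep A;
  indep_aug : forall A B : {set T}, indep A -> indep B -> #|A| < #|B| ->
      exists2 x, x \in B :\: A & indep (x |: A)
}.

Section MatroidDefs.
Variables (T : finType) (M : matroid T).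

Definition mrank (A : {set T}) : nat :=
  \max_(B : {set T} | (B \subset A) && indep M B) #|B|.

Definition rank_of : nat := mrank [set: T].

Definition loopless : Prop := forall x : T, indep M [set x].

Definition closure (X : {set T}) : {set T} :=
  [set x | mrank (x |: X) == mrank X].
Definition flat (F : {set T}) : bool := closure F == F.

Definition claw (X : {set T}) : bool := flat X && indep M X.
Definition kclaw (k : nat) (X : {set T}) : bool := claw X && (#|X| == k).

Definition circuit (C : {set T}) : bool :=
  ~~ indep M C && [forall x in C, indep M (C :\ x)].

(* M is the direct sum of k circuits and some number of coloops:
   there are k pairwise disjoint nonempty sets C_1..C_k, each a circuit of M,
   such that the independent sets of M are exactly the sets containing none
   of the C_i (i.e. M = U_{|C_1|-1,|C_1|} (+) ... (+) U_{|C_k|-1,|C_k|} (+) free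
   matroid on the remaining elements, which are coloops). *)
Definition direct_sum_circuits_coloops (k : nat) : Prop :=
  exists Cs : {set {set T}},
    [/\ trivIset Cs, set0 \notin Cs, #|Cs| = k,
        (forall C, C \in Cs -> circuit C) &
        (forall X : {set T}, indep M X = [forall C in Cs, ~~ (C \subset X)])].
End MatroidDefs.

From mathcomp Require Import all_boot zify.
Set Implicit Arguments. Unset Strict Implicit. Unset Printing Implicit Defensive.

(* Fix a basis B. For e outside B, the elements of B exchangeable with e form,
   together with e, the fundamental circuit of e; looplessness makes this
   exchange set nonempty. If g picks an exchangeable g e for every e outside B,
   every subset of B missing the image of g is a claw, since adding any element
   keeps it independent. So at most t elements of B are missed, and
   r - t <= |E - B| = |E| - r. In the equality case every such g is injective,
   i.e. exchange sets of distinct elements are disjoint, for every basis.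
   Exchanging any F in E - B against g(F) then yields a basis again (induction
   on |F|, applying disjointness to the intermediate bases), and every set
   containing no fundamental circuit lies in such a basis: M is the direct sum
   of the r - t fundamental circuits and the coloops. *)

Lemma subset_of_card (T : finType) (A : {set T}) k :
  k <= #|A| -> exists2 X : {set T}, X \subset A & #|X| = k.
Proof.
rewrite -bin_gt0 -cards_draws => /card_gt0P[X]; rewrite inE => /andP[sXA /eqP cX].
by exists X.
Qed.

Lemma notin_subsetC (T : finType) (A F : {set T}) x :
  F \subset ~: A -> x \in F -> x \notin A.
Proof. by move=> sF /(subsetP sF); rewrite inE. Qed.

Section Matroid.
Variables (T : finType) (M : matroid T).

Definition basis (B : {set T}) := indep M B && (#|B| == rank_of M).

Lemma mrank_indep (A : {set T}) : indep M A -> mrank M A = #|A|.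
Proof.
move=> iA; apply/eqP; rewrite eqn_leq; apply/andP; split.
  by apply/bigmax_leqP => X /andP[sXA _]; apply: subset_leq_card.
apply: (@leq_bigmax_cond _ (fun X : {set T} => (X \subset A) && indep M X)).
by rewrite subxx iA.
Qed.

Lemma indep_card_le_rank (A : {set T}) : indep M A -> #|A| <= rank_of M.
Proof.
move=> iA; apply: (@leq_bigmax_cond _ (fun X : {set T} => (X \subset _) && indep M X)).
by rewrite subsetT iA.
Qed.

Lemma exists_basis : exists B, basis B.
Proof.
pose P (X : {set T}) := (X \subset setT) && indep M X.
have P0 : 0 < #|P| by apply/card_gt0P; exists set0; rewrite unfold_in /P sub0set indep0.
have [B /andP[_ iB] cB] := eq_bigmax_cond (fun X : {set T} => #|X|) P0.
by exists B; rewrite /basis iB /rank_of /mrank; apply/eqP; rewrite -cB.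
Qed.

Lemma indep_extend (I K S : {set T}) :
  indep M I -> indep M K -> I \subset S -> K \subset S ->
  exists J, [/\ indep M J, I \subset J, J \subset S & #|K| <= #|J|].
Proof.
move=> iI iK sIS sKS.
pose P (J : {set T}) := [&& indep M J, I \subset J & J \subset S].
have P0 : 0 < #|P| by apply/card_gt0P; exists I; rewrite unfold_in /P iI subxx sIS.
have [J /and3P[iJ sIJ sJS] maxJ] := eq_bigmax_cond (fun J : {set T} => #|J|) P0.
exists J; split => //; rewrite leqNgt; apply/negP => ltJK.
have [x /setDP[xK xJ] ixJ] := indep_aug iJ iK ltJK.
have : #|x |: J| <= \max_(J in P) #|J|.
  apply: (@leq_bigmax_cond _ P (fun J : {set T} => #|J|)).
  by rewrite /P ixJ (subset_trans sIJ (subsetUr _ _)) subUset sub1set (subsetP sKS) ?sJS.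
by rewrite maxJ cardsU1 xJ ltnn.
Qed.

Lemma indep_ext_flat (X : {set T}) :
  indep M X -> (forall x, x \notin X -> indep M (x |: X)) -> flat M X.
Proof.
move=> iX extX; apply/eqP/setP => x; rewrite inE.
have [xX|xX] := boolP (x \in X); first by rewrite (setUidPr _) ?sub1set ?eqxx.
by rewrite (mrank_indep (extX x xX)) (mrank_indep iX) cardsU1 xX eqn_leq ltnn.
Qed.

Lemma basis_exchange (B I : {set T}) e :
  basis B -> e \notin B -> indep M I -> e \in I -> I \subset e |: B ->
  exists2 y, y \in B :\: I & indep M (e |: (B :\ y)).
Proof.
move=> /andP[iB /eqP cB] eB iI eI sIeB.
have [J [iJ sIJ sJeB leBJ]] := indep_extend iI iB sIeB (subsetUr _ _).
have [y yeB yJ] : exists2 y, y \in e |: B & y \notin J.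
  apply/subsetPn/negP => /indep_sub/(_ iJ)/indep_card_le_rank.
  by rewrite cardsU1 eB cB ltnn.
have ye : y != e by apply: contraNneq yJ => ->; apply: (subsetP sIJ).
have yB : y \in B by move: yeB; rewrite in_setU1 (negbTE ye).
exists y; first by rewrite inE yB andbT; apply: contra yJ; apply: (subsetP sIJ).
have sJ : J \subset e |: (B :\ y).
  apply/subsetP => x xJ; move: (subsetP sJeB x xJ); rewrite !inE => /orP[->//|xB].
  have xy : x != y by apply: contraNneq yJ => <-.
  by rewrite xy xB orbT.
suff <- : J = e |: (B :\ y) by [].
apply/eqP; rewrite eqEcard sJ /=; apply: leq_trans leBJ.
by rewrite cardsU1 (cardsD1 y B) yB; case: (e \notin _).
Qed.

Definition exch_set (B : {set T}) e := [set b in B | indep M (e |: (B :\ b))].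

Definition fcircuit (B : {set T}) e := e |: exch_set B e.

Lemma exch_set_sub B e : exch_set B e \subset B.
Proof. by apply/subsetP => x; rewrite inE => /andP[]. Qed.

Lemma exch_set_neq0 B e :
  loopless M -> basis B -> e \notin B -> exch_set B e != set0.
Proof.
move=> loopM bB eB.
have sIeB : [set e] \subset e |: B by rewrite sub1set setU11.
have [y /setDP[yB _] iy] := basis_exchange bB eB (loopM e) (set11 e) sIeB.
by apply/set0Pn; exists y; rewrite inE iy yB.
Qed.

Lemma fcircuit_dep B e : basis B -> e \notin B -> ~~ indep M (fcircuit B e).
Proof.
move=> bB eB; apply/negP => iC.
have sCeB : fcircuit B e \subset e |: B by apply/setUS/exch_set_sub.
have [y /setDP[yB yC] iy] := basis_exchange bB eB iC (setU11 _ _) sCeB.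
by move: yC; rewrite !inE yB iy orbT.
Qed.

Lemma fcircuit_circuit B e : basis B -> e \notin B -> circuit M (fcircuit B e).
Proof.
move=> bB eB; rewrite /circuit fcircuit_dep //=; apply/forall_inP => x.
case: (eqVneq x e) => [-> _|xe].
  apply: indep_sub (proj1 (andP bB)); rewrite /fcircuit setU1K ?exch_set_sub //.
  by apply: contra eB; apply/subsetP/exch_set_sub.
rewrite /fcircuit in_setU1 (negbTE xe) /= => xA.
move: (xA); rewrite inE => /andP[_]; apply: indep_sub.
apply/subsetP => y; rewrite !inE => /andP[yx /orP[->//|/andP[yB _]]].
by rewrite yx yB orbT.
Qed.

Definition exch_choice (B : {set T}) (g : T -> T) :=
  forall x, x \notin B -> g x \in exch_set B x.

Lemma exists_exch_choice B (P : T -> pred T) :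
  loopless M -> basis B ->
  exists g, exch_choice B g /\
    forall x, x \notin B -> (exists2 y, y \in exch_set B x & P x y) -> P x (g x).
Proof.
move=> loopM bB.
pose g x := if [pick y in exch_set B x | P x y] is Some y then y
            else odflt x [pick y in exch_set B x].
exists g; split => x xB; rewrite /g; case: pickP => [y /andP[] //|noP].
  case: pickP => [//|none]; have /set0Pn[b bA] := exch_set_neq0 loopM bB xB.
  by have := none b; rewrite bA.
by case=> y yA Py; have := noP y; rewrite yA Py.
Qed.

Lemma exch_choice_mem B g x : exch_choice B g -> x \notin B -> g x \in B.
Proof. by move=> gB xB; apply: (subsetP (exch_set_sub B x)); apply: gB. Qed.

Lemma unexchanged_claw B g (X : {set T}) :
  indep M B -> exch_choice B g -> X \subset B :\: g @: (~: B) -> claw M X.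
Proof.
move=> iB gB sX; have sXB : X \subset B := subset_trans sX (subsetDl _ _).
have iX := indep_sub sXB iB; rewrite /claw iX andbT.
apply: indep_ext_flat => // x xX; have [xB|xB] := boolP (x \in B).
  by apply: indep_sub iB; rewrite subUset sub1set xB sXB.
move: (gB x xB); rewrite inE => /andP[_]; apply/indep_sub/setUS/subsetP => y yX.
rewrite !inE (subsetP sXB) // andbT; apply: contraTneq (subsetP sX y yX) => ->.
by rewrite inE imset_f ?inE.
Qed.

Section ClawFree.
Variable t : nat.
Hypotheses (loopM : loopless M) (clawfree : forall X : {set T}, ~~ kclaw M t.+1 X).

Lemma card_exch_image B g :
  basis B -> exch_choice B g -> rank_of M - t <= #|g @: (~: B)|.
Proof.
move=> bB gB; have /andP[iB /eqP cB] := bB.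
have unexch : #|B :\: g @: (~: B)| <= t.
  rewrite leqNgt; apply/negP => /subset_of_card[X sX cX].
  by have := clawfree X; rewrite /kclaw (unexchanged_claw iB gB sX) cX eqxx.
have := subset_leq_card (subsetIr B (g @: (~: B))).
by move: unexch; rewrite cardsD cB; lia.
Qed.

Lemma card_ge_2rank : 2 * rank_of M - t <= #|T|.
Proof.
have [B bB] := exists_basis; have /andP[_ /eqP cB] := bB.
have [g [gB _]] := exists_exch_choice (fun _ _ => true) loopM bB.
have := leq_trans (card_exch_image bB gB) (leq_imset_card g _).
by have := cardsC B; rewrite cB; lia.
Qed.

Section Tight.
Hypothesis tight : #|T| + t = 2 * rank_of M.

Lemma exch_set_disjoint B e f :
  basis B -> e \notin B -> f \notin B -> e != f ->
  [disjoint exch_set B e & exch_set B f].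
Proof.
move=> bB eB fB ef; have /andP[_ /eqP cB] := bB.
(* a common element b lets g send both e and f to b, shrinking its image *)
rewrite -setI_eq0; apply: contraT => /set0Pn[b]; rewrite inE => /andP[be bf].
pose P x y := (x \in [set e; f]) ==> (y == b).
have [g [gB gP]] := exists_exch_choice P loopM bB.
have gb x : x \in [set e; f] -> g x = b.
  move=> xef; have xb : b \in exch_set B x by case/set2P: xef => ->.
  have xB : x \notin B by case/set2P: xef => ->.
  by apply/eqP; move: (gP x xB); rewrite /P xef /=; apply; exists b.
have sG : g @: (~: B) \subset g @: (~: B :\ e).
  apply/subsetP => _ /imsetP[x xB ->]; case: (eqVneq x e) => [->|xe].
    by rewrite gb ?set21 // -(gb f) ?set22 // imset_f // !inE eq_sym ef.
  by rewrite imset_f // in_setD1 xe.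
have := leq_trans (card_exch_image bB gB) (subset_leq_card sG).
have := leq_imset_card g (~: B :\ e).
have := cardsD1 e (~: B); have := cardsC B.
by rewrite inE eB cB; lia.
Qed.

Lemma exch_choice_inj B g : basis B -> exch_choice B g -> {in ~: B &, injective g}.
Proof.
move=> bB gB x y; rewrite !inE => xB yB gxy; apply/eqP; apply: contraT => xy.
have := disjointFr (exch_set_disjoint bB xB yB xy) (gB x xB).
by rewrite gxy gB.
Qed.

Section Exchange.
Variables (B : {set T}) (g : T -> T).
Hypotheses (bB : basis B) (gB : exch_choice B g).

Definition exch_all (F : {set T}) := (B :\: g @: F) :|: F.

Lemma card_exch_all (F : {set T}) : F \subset ~: B -> #|exch_all F| = rank_of M.
Proof.
move=> sF; have /andP[_ /eqP <-] := bB.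
have dBF : (B :\: g @: F) :&: F = set0.
  apply/setP => x; rewrite !inE; case xF: (x \in F); rewrite ?andbF //.
  by rewrite (negbTE (notin_subsetC sF xF)) andbF.
have sGB : g @: F \subset B.
  apply/subsetP => _ /imsetP[x xF ->].
  exact: exch_choice_mem gB (notin_subsetC sF xF).
have cG : #|g @: F| = #|F|.
  by apply: card_in_imset; apply: sub_in2 (exch_choice_inj bB gB); apply/subsetP.
rewrite cardsU dBF cards0 (cardsDS sGB) cG; have := subset_leq_card sGB; lia.
Qed.

Lemma mem_exch_image (F : {set T}) x :
  F \subset ~: B -> x \notin B -> (g x \in g @: F) = (x \in F).
Proof.
move=> sF xB; apply/imsetP/idP => [[y yF gxy]|]; last by exists x.
by rewrite (exch_choice_inj bB gB _ _ gxy) ?inE ?(notin_subsetC sF yF).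
Qed.

Lemma notin_exch_all (F : {set T}) f : f \notin B -> f \notin F -> f \notin exch_all F.
Proof. by move=> fB fF; rewrite !inE (negbTE fB) (negbTE fF) andbF. Qed.

Lemma exch_image_notin (F : {set T}) x :
  F \subset ~: B -> x \in F -> g x \notin exch_all F.
Proof.
move=> sF xF; rewrite !inE imset_f //=.
by apply: contraTN (exch_choice_mem gB (notin_subsetC sF xF)) => /(notin_subsetC sF).
Qed.

Lemma mem_exch_set_exch_all (F : {set T}) x :
  F \subset ~: B -> x \in F -> indep M (exch_all (F :\ x)) ->
  x \in exch_set (exch_all F) (g x).
Proof.
move=> sF xF iYx; rewrite inE in_setU xF orbT /=.
apply: indep_sub iYx; apply/subsetP => y.
rewrite !inE => /orP[/eqP->|/andP[yx /orP[/andP[yG ->]|->]]].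
- have xB := notin_subsetC sF xF.
  rewrite (exch_choice_mem gB xB) andbT mem_exch_image ?inE ?eqxx //.
  exact: subset_trans (subsetDl _ _) sF.
- by rewrite (contra _ yG) //; apply/subsetP/imsetS/subsetDl.
- by rewrite yx orbT.
Qed.

Lemma indep_exch_allU1 (F : {set T}) f :
  F \subset ~: B -> f \notin B -> f \notin F ->
  indep M (exch_all F) -> {in F, forall x, indep M (exch_all (F :\ x))} ->
  indep M (exch_all (f |: F)).
Proof.
move=> sF fB fF iY iYx; set Y := exch_all F.
have bY : basis Y by rewrite /basis iY card_exch_all ?eqxx.
have fY : f \notin Y := notin_exch_all fB fF.
(* by disjointness for the basis Y, no element of F is exchangeable with f *)
have AfY : exch_set Y f \subset B :\: g @: F.
  apply/subsetP => y yA; move: (subsetP (exch_set_sub Y f) y yA).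
  rewrite in_setU => /orP[//|yF].
  have gyf : g y != f.
    by apply: contraTneq (exch_choice_mem gB (notin_subsetC sF yF)) => ->.
  have := exch_set_disjoint bY (exch_image_notin sF yF) fY gyf.
  by move/disjointFr/(_ (mem_exch_set_exch_all sF yF (iYx y yF))); rewrite yA.
have gfA : g f \in exch_set Y f.
  apply/negPn/negP => gfnA; apply: (negP (fcircuit_dep bY fY)).
  move: (gB fB); rewrite inE => /andP[_]; apply: indep_sub; apply: setUS.
  apply/subsetP => y yA; move: (subsetP AfY y yA); rewrite !inE => /andP[_ ->].
  by rewrite andbT; apply: contraNneq gfnA => <-.
move: gfA; rewrite inE => /andP[_]; apply: indep_sub; apply/subsetP => y.
rewrite /Y /exch_all imsetU1 !inE negb_or -!andbA.
case/orP=> [/and3P[yf yG yB]|/orP[->//|yF]]; first by rewrite yf yG yB orbT.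
have ygf : y != g f.
  by apply: contraTneq (exch_choice_mem gB fB) => <-; apply: notin_subsetC sF yF.
by rewrite yF ygf !orbT.
Qed.

Lemma indep_exch_all (F : {set T}) : F \subset ~: B -> indep M (exch_all F).
Proof.
elim: {F}#|F|.+1 {-2}F (ltnSn #|F|) => // n IH F ltFn sF.
have [->|[f fF]] := set_0Vmem F.
  by rewrite /exch_all imset0 setD0 setU0; case/andP: bB.
have sF' : F :\ f \subset ~: B := subset_trans (subsetDl _ _) sF.
have ltF' : #|F :\ f| < n by move: ltFn; rewrite (cardsD1 f F) fF.
rewrite -(setD1K fF); apply: indep_exch_allU1 => //.
- exact: notin_subsetC sF fF.
- by rewrite !inE eqxx.
- exact: IH.
move=> x _; apply: IH; last exact: subset_trans (subsetDl _ _) sF'.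
exact: leq_ltn_trans (subset_leq_card (subsetDl _ _)) ltF'.
Qed.

End Exchange.

Lemma fcircuit_disjoint B e f :
  basis B -> e \notin B -> f \notin B -> e != f ->
  [disjoint fcircuit B e & fcircuit B f].
Proof.
move=> bB eB fB ef.
have notA y z : y \notin B -> y \notin exch_set B z.
  by apply: contra; apply/subsetP/exch_set_sub.
apply/pred0P => x /=; rewrite /fcircuit !in_setU1.
have [->|xe] := eqVneq x e; first by rewrite (negbTE ef) (negbTE (notA _ f eB)).
have [->|xf] := eqVneq x f; first by rewrite (negbTE (notA _ e fB)).
case xA: (x \in exch_set B e) => //=.
by rewrite (disjointFr (exch_set_disjoint bB eB fB ef) xA).
Qed.

Lemma indep_fcircuitsE B (X : {set T}) : basis B ->
  indep M X = [forall C in [set fcircuit B e | e in ~: B], ~~ (C \subset X)].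
Proof.
move=> bB; apply/idP/forall_inP => [iX ? /imsetP[e]|noC].
  by rewrite inE => eB ->; apply: contra (fcircuit_dep bB eB) => /indep_sub; apply.
have [g [gB gP]] := exists_exch_choice (fun _ y => y \notin X) loopM bB.
have gX x : x \in X -> x \notin B -> g x \notin X.
  move=> xX xB; apply: gP => //.
  have /subsetPn[y] : ~~ (fcircuit B x \subset X) by rewrite noC ?imset_f ?inE.
  by rewrite in_setU1 => /orP[/eqP->|yA yX]; [rewrite xX | exists y].
have sXB : X :\: B \subset ~: B by apply/subsetP => x; rewrite !inE => /andP[].
apply: indep_sub (indep_exch_all bB gB sXB); apply/subsetP => x xX.
rewrite /exch_all !inE xX andbT; case: (boolP (x \in B)) => xB; rewrite ?orbT // orbF andbT.
apply/imsetP => -[y]; rewrite inE => /andP[yB yX] xgy.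
by have := gX y yX yB; rewrite -xgy xX.
Qed.

Lemma direct_sum_fcircuits B : basis B -> direct_sum_circuits_coloops M #|~: B|.
Proof.
move=> bB; exists [set fcircuit B e | e in ~: B]; split.
- apply/trivIsetP => _ _ /imsetP[e eB ->] /imsetP[f fB ->] neq.
  rewrite inE in eB; rewrite inE in fB.
  by apply: fcircuit_disjoint => //; apply: contraNneq neq => ->.
- by apply/imsetP => -[e _ /setP/(_ e)]; rewrite inE setU11.
- apply: card_in_imset => e f; rewrite !inE => eB fB efC.
  have := setU11 e (exch_set B e); rewrite -/(fcircuit B e) efC in_setU1.
  by case/orP=> [/eqP//|/(subsetP (exch_set_sub B f))]; rewrite (negbTE eB).
- by move=> ? /imsetP[e]; rewrite inE => eB ->; apply: fcircuit_circuit.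
- by move=> X; apply: indep_fcircuitsE.
Qed.

End Tight.
End ClawFree.
End Matroid.

Theorem lemma3p2 (T : finType) (M : matroid T) (r t : nat) :
  1 <= t -> t <= r ->
  rank_of M = r ->
  loopless M ->
  (forall X : {set T}, ~~ kclaw M t.+1 X) ->
  2 * r - t <= #|T| /\
  (#|T| = 2 * r - t -> direct_sum_circuits_coloops M (r - t)).
Proof.
move=> _ le_tr rM loopM clawfree; subst r; split; first exact: card_ge_2rank.
move=> cT; have tight : #|T| + t = 2 * rank_of M by lia.
have [B bB] := exists_basis M; have /andP[_ /eqP cB] := bB.
have <- : #|~: B| = rank_of M - t by have := cardsC B; rewrite cB; lia.
exact: direct_sum_fcircuits loopM clawfree tight B bB.
Qed.
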